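(* Let $X$ be a real Banach space ordered by a cone $K$. Suppose $A$ is a bounded, $K$-preserving, semi-nonsupporting operator with $A=T+F$, where $T,F$ are bounded linear operators with $T(K)\subseteq K$, $F(K)\subseteq K$. Then $aT+bF$ is semi-nonsupporting for all real $a,b>0$.
   Context: A cone $K\subseteq X$ is a closed convex set such that $\alpha x\in K$ whenever $x\in K,\ \alpha\ge 0$, and such that $x\in K$, $-x\in K$ imply $x=0$. The dual cone is $K^*=\{f\in X^*: f(x)\ge 0\ \forall x\in K\}$. A bounded operator $B$ with $B(K)\subseteq K$ is semi-nonsupporting if for every pair $(x,f)$ with $x\in K\setminus\{0\}$ and $f\in K^*\setminus\{0\}$ there is $n=n(x,f)\in\mathbb N$ with $f(B^n x)>0$. *)

From HB Require Import structures.
From mathcomp Require Import all_boot all_order all_algebra.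
From mathcomp Require Import all_classical all_reals all_analysis.
Import Order.TTheory GRing.Theory Num.Theory.
Import numFieldNormedType.Exports.
Local Open Scope ring_scope.
Local Open Scope classical_set_scope.

Section Defs.
Context {R : realType} {X : normedModType R}.

Definition is_cone (K : set X) : Prop :=
  closed K /\
  (forall x y (t : R), K x -> K y -> 0 <= t -> t <= 1 ->
      K (t *: x + (1 - t) *: y)) /\
  (forall x (a : R), K x -> 0 <= a -> K (a *: x)) /\
  (forall x, K x -> K (- x) -> x = 0).

Definition bounded_op (B : X -> X) : Prop :=
  (forall (a : R) x y, B (a *: x + y) = a *: B x + B y) /\ continuous B.

Definition preserves (K : set X) (B : X -> X) : Prop :=
  forall x, K x -> K (B x).

Definition dual_cone (K : set X) : set (X -> R) :=
  [set f : X -> R | (forall (a : R) x y, f (a *: x + y) = a * f x + f y) /\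
           continuous f /\ (forall x, K x -> 0 <= f x)].

Definition semi_nonsupporting (K : set X) (B : X -> X) : Prop :=
  forall x f, K x -> x <> 0 -> dual_cone K f -> f <> (fun _ => 0) ->
    exists n : nat, (0 < n)%N /\ 0 < f (iter n B x).

End Defs.

From HB Require Import structures.
From mathcomp Require Import all_boot all_order all_algebra.
From mathcomp Require Import all_classical all_reals all_analysis.
Import Order.TTheory GRing.Theory Num.Theory.
Import numFieldNormedType.Exports.
Local Open Scope ring_scope.
Local Open Scope classical_set_scope.

(* With c := min(a, b), the operator B := aT + bF dominates cA in the cone
   order: By - cAy = (a - c)Ty + (b - c)Fy lies in K for y in K.  Iterating,
   B^n x - c^n A^n x lies in K, so f (B^n x) >= c^n f (A^n x) for every f in
   K^*, and positivity of f (A^n x) transfers to f (B^n x). *)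

Section Domination.
Context {R : realType} {X : normedModType R}.
Implicit Types (K : set X) (A B : X -> X).

Definition linear_op B := forall (d : R) x y, B (d *: x + y) = d *: B x + B y.

Lemma linear_op0 {B : X -> X} : linear_op B -> B 0 = 0.
Proof.
move=> linB; have := linB 1 0 0; rewrite !scale1r addr0.
by move/(congr1 (fun z => z - B 0)); rewrite /= subrr addrK.
Qed.

Lemma linear_opD {B : X -> X} : linear_op B -> forall x y, B (x + y) = B x + B y.
Proof. by move=> linB x y; rewrite -[x in LHS]scale1r linB scale1r. Qed.

Lemma linear_opZ {B : X -> X} : linear_op B -> forall (d : R) x, B (d *: x) = d *: B x.
Proof. by move=> linB d x; rewrite -[_ *: x]addr0 linB linear_op0 ?addr0. Qed.

Lemma linear_opB {B : X -> X} : linear_op B -> forall x y, B (x - y) = B x - B y.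
Proof.
move=> linB x y.
by rewrite addrC -scaleN1r linB scaleN1r addrC.
Qed.

Lemma cone_add {K} : is_cone K -> forall x y, K x -> K y -> K (x + y).
Proof.
move=> [_ [convK [scaleK _]]] x y Kx Ky.
have half_sub : 1 - 2^-1 = 2^-1 :> R by rewrite [X in X - _](splitr 1) mul1r addrK.
have Kmid : K (2^-1 *: x + 2^-1 *: y).
  by rewrite -{2}half_sub; apply: convK; rewrite // invf_le1 ?ler1n.
have := scaleK _ 2 Kmid (ler0n _ 2).
by rewrite scalerDr !scalerA mulfV ?pnatr_eq0 // !scale1r.
Qed.

Lemma preserves_iter {K A} : preserves K A ->
  forall n x, K x -> K (iter n A x).
Proof. by move=> pA; elim=> //= n IH x Kx; apply/pA/IH. Qed.

Lemma dominated_iter {K A B} {c : R} :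
  is_cone K -> preserves K A -> preserves K B -> linear_op B -> 0 <= c ->
  (forall y, K y -> K (B y - c *: A y)) ->
  forall n x, K x -> K (iter n B x - c ^+ n *: iter n A x).
Proof.
move=> coneK pA pB linB c0 domB n x Kx; have scaleK := coneK.2.2.1.
elim: n => [|n IH].
  by rewrite /= scale1r subrr -(scale0r x); apply: scaleK.
have -> : iter n.+1 B x - c ^+ n.+1 *: iter n.+1 A x =
    B (iter n B x - c ^+ n *: iter n A x) +
    c ^+ n *: (B (iter n A x) - c *: A (iter n A x)).
  rewrite /= (linear_opB linB) (linear_opZ linB) scalerBr scalerA -exprSr.
  by rewrite addrA subrK.
apply: (cone_add coneK); first exact: pB.
by apply: scaleK; [apply/domB/(preserves_iter pA) | exact: exprn_ge0].
Qed.

Lemma semi_nonsupporting_dominated {K A B} (c : R) :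
  is_cone K -> preserves K A -> preserves K B -> linear_op B -> 0 < c ->
  (forall y, K y -> K (B y - c *: A y)) ->
  semi_nonsupporting K A -> semi_nonsupporting K B.
Proof.
move=> coneK pA pB linB c0 domB snA x f Kx x0 Kf f0.
have [n [n0 fAn]] := snA x f Kx x0 Kf f0.
exists n; split => //.
have Kdiff := dominated_iter coneK pA pB linB (ltW c0) domB n x Kx.
have [linf [_ fK]] := Kf.
rewrite -(subrK (c ^+ n *: iter n A x) (iter n B x)) addrC linf.
by apply: ltr_wpDr; [exact: fK | rewrite mulr_gt0 ?exprn_gt0].
Qed.

End Domination.

Theorem corollary3p6 (R : realType) (X : completeNormedModType R)
  (K : set X) (A T F : X -> X) :
  is_cone K ->
  bounded_op A -> preserves K A -> semi_nonsupporting K A ->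
  (forall x, A x = T x + F x) ->
  bounded_op T -> bounded_op F -> preserves K T -> preserves K F ->
  forall a b : R, 0 < a -> 0 < b ->
    semi_nonsupporting K (fun x => a *: T x + b *: F x).
Proof.
move=> coneK _ pA snA defA [linT _] [linF _] pT pF a b a0 b0.
have scaleK := coneK.2.2.1.
set c := Num.min a b.
apply: (semi_nonsupporting_dominated c coneK pA _ _ _ _ snA).
- move=> x Kx; apply: (cone_add coneK).
  + by apply: scaleK; [exact: pT | exact: ltW].
  + by apply: scaleK; [exact: pF | exact: ltW].
- move=> d x y; rewrite (linear_opD linT) (linear_opD linF).
  rewrite (linear_opZ linT) (linear_opZ linF) !scalerDr !scalerA.
  by rewrite [a * d]mulrC [b * d]mulrC addrACA.
- by rewrite lt_min a0 b0.
- move=> y Ky; rewrite defA scalerDr opprD addrACA -!scalerBl.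
  apply: (cone_add coneK).
  + by apply: scaleK; [exact: pT | rewrite subr_ge0 /c ge_min lexx].
  + by apply: scaleK; [exact: pF | rewrite subr_ge0 /c ge_min lexx orbT].
Qed.
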